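(* Let $n \geq 2$, $R > 0$, and let $m$ be a uniform (rotation-invariant) measure on $S^{n-1}_R = \{x\in\mathbb{R}^n : \|x\|=R\}$, normalized or not. Let $\Psi:\mathbb{R}\to\mathbb{R}$ be convex and uniformly continuous, let $f:S^{n-1}_R\to[0,1]$ be integrable, and let $K:\mathbb{R}\to\mathbb{R}$ be non-decreasing, bounded and measurable. For $g: S^{n-1}_R \to \mathbb{R}$ write $Kg(x) = \int_{S^{n-1}_R} K(\langle x,y\rangle) g(y)\,dm(y)$. Then for every hyperplane $\sigma$ through the origin that does not contain $r = (R,0,\ldots,0)$, \[ \int_{S^{n-1}_R} \Psi(Kf(x))\,dm(x) \leq \int_{S^{n-1}_R} \Psi(Kf^{\sigma}(x))\,dm(x). \]
   Context: For a hyperplane $\sigma$ through the origin not containing $r$, let $v$ be the unit normal vector of $\sigma$ with $\langle v, r\rangle > 0$; let $H^+_\sigma = \{x \in S^{n-1}_R : \langle x,v\rangle \geq 0\}$ (the hemisphere containing $r$) and $H^-_\sigma = \{x\in S^{n-1}_R : \langle x, v\rangle < 0\}$. For $x \in S^{n-1}_R$, $\sigma x$ denotes the reflection of $x$ across $\sigma$. The polarization of $f$ with respect to $\sigma$ is $f^\sigma(x) = \max\{f(x), f(\sigma x)\}$ if $x \in H^+_\sigma$ and $f^\sigma(x) = \min\{f(x), f(\sigma x)\}$ if $x\in H^-_\sigma$. *)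

From HB Require Import structures.
From mathcomp Require Import all_boot all_order all_algebra.
From mathcomp Require Import all_classical all_reals all_analysis.
Set Implicit Arguments. Unset Strict Implicit. Unset Printing Implicit Defensive.
Import numFieldNormedType.Exports.
Import Order.TTheory GRing.Theory Num.Theory.
Local Open Scope classical_set_scope.
Local Open Scope ring_scope.

(* R^n as row vectors, equipped with its Borel sigma-algebra (generated by the
   open sets of the product topology of 'rV[R]_n). *)
Definition Rn (R : realType) (n : nat) :=
  g_sigma_algebraType (@open 'rV[R]_n).

Definition dotp (R : realType) (n : nat) (x y : 'rV[R]_n) : R :=
  \sum_(i < n) x ord0 i * y ord0 i.

Definition sphere (R : realType) (n : nat) (rad : R) : set (Rn R n) :=
  [set x : Rn R n | Num.sqrt (dotp x x) = rad].

Definition north (R : realType) (k : nat) (rad : R) : 'rV[R]_k.+1 :=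
  \row_(i < k.+1) (if i == ord0 then rad else 0).

Definition orthogonal_mx (R : realType) (n : nat) (Q : 'M[R]_n) : Prop :=
  Q *m Q^T = 1%:M.

(* m is uniform (rotation-invariant) on the sphere: invariant under every
   orthogonal map, acting on Borel subsets of the sphere. *)
Definition rotation_invariant_on (R : realType) (n : nat) (S : set (Rn R n))
    (m : set (Rn R n) -> \bar R) : Prop :=
  forall (Q : 'M[R]_n), orthogonal_mx Q ->
  forall A : set (Rn R n), measurable A -> A `<=` S ->
    m ((fun x : Rn R n => (x *m Q : Rn R n)) @^-1` A `&` S) = m A.

Definition convex_fun (R : realType) (Psi : R -> R) : Prop :=
  forall (x y t : R), 0 <= t <= 1 ->
    Psi (t * x + (1 - t) * y) <= t * Psi x + (1 - t) * Psi y.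

(* Reflection across the hyperplane sigma = v^perp (v a unit vector). *)
Definition reflect_hyp (R : realType) (n : nat) (v x : 'rV[R]_n) : 'rV[R]_n :=
  x - (2 * dotp x v) *: v.

(* Polarization of f w.r.t. the hyperplane with unit normal v, where v is the
   normal with <v, r> > 0, so H^+ = {<x,v> >= 0}. *)
Definition polarization (R : realType) (n : nat) (v : 'rV[R]_n)
    (f : 'rV[R]_n -> R) (x : 'rV[R]_n) : R :=
  if 0 <= dotp x v then Num.max (f x) (f (reflect_hyp v x))
  else Num.min (f x) (f (reflect_hyp v x)).

Definition Kop (R : realType) (n : nat) (S : set (Rn R n))
    (m : {measure set (Rn R n) -> \bar R}) (K : R -> R)
    (g : Rn R n -> R) (x : Rn R n) : R :=
  Rintegral m S (fun y => K (dotp x y) * g y).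

(* The reflection σ across the hyperplane is orthogonal, so it preserves the
   sphere and the measure m; hence two integrals over the sphere compare as soon
   as the symmetrized integrands h y + h (σ y) compare pointwise.
   Fix x in H+. As K is nondecreasing, K <x, y> >= K <x, σ y> exactly when y
   lies in H+, which is where the polarization puts the larger of f y and
   f (σ y). A two-point rearrangement inside the integral defining K therefore
   shows that (K f^σ x, K f^σ (σ x)) majorizes (K f x, K f (σ x)): the sums
   agree and K f^σ x dominates both K f x and K f (σ x). Convexity of Ψ turns
   this majorization into the required pointwise inequality. *)

From HB Require Import structures.
From mathcomp Require Import all_boot all_order all_algebra.
From mathcomp Require Import all_classical all_reals all_analysis.
From mathcomp Require Import ring lra measurable_realfun.
Import Order.TTheory GRing.Theory Num.Theory.
Import numFieldNormedType.Exports.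
Set Implicit Arguments. Unset Strict Implicit. Unset Printing Implicit Defensive.
Local Open Scope classical_set_scope.
Local Open Scope ring_scope.

Section InnerProduct.
Variables (R : realType) (n : nat).
Implicit Types (x y z v : 'rV[R]_n) (f : 'rV[R]_n -> R).

Lemma dotpC x y : dotp x y = dotp y x.
Proof. by apply: eq_bigr => i _; rewrite mulrC. Qed.

Lemma dotpDl x y z : dotp (x + y) z = dotp x z + dotp y z.
Proof. by rewrite /dotp -big_split; apply: eq_bigr => i _; rewrite mxE mulrDl. Qed.

Lemma dotpZl a x y : dotp (a *: x) y = a * dotp x y.
Proof. by rewrite /dotp mulr_sumr; apply: eq_bigr => i _; rewrite mxE mulrA. Qed.

Lemma dotpBl x y z : dotp (x - y) z = dotp x z - dotp y z.
Proof. by rewrite dotpDl -scaleN1r dotpZl mulN1r. Qed.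

Lemma dotp_reflect_hypl v x y :
  dotp (reflect_hyp v x) y = dotp x y - 2 * dotp x v * dotp v y.
Proof. by rewrite /reflect_hyp dotpBl dotpZl. Qed.

Lemma dotp_reflect_hyp_sym v x y :
  dotp (reflect_hyp v x) y = dotp x (reflect_hyp v y).
Proof.
rewrite dotp_reflect_hypl [RHS]dotpC dotp_reflect_hypl.
by rewrite (dotpC y x) (dotpC v x) (dotpC y v); ring.
Qed.

Lemma reflect_hyp_id v x : dotp x v = 0 -> reflect_hyp v x = x.
Proof. by move=> xv0; rewrite /reflect_hyp xv0 mulr0 scale0r subr0. Qed.

Section UnitNormal.
Variable v : 'rV[R]_n.
Hypothesis v_unit : dotp v v = 1.

Lemma dotp_reflect_hyp_normal x : dotp (reflect_hyp v x) v = - dotp x v.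
Proof. by rewrite dotp_reflect_hypl v_unit mulr1; ring. Qed.

Lemma reflect_hypK : involutive (reflect_hyp v).
Proof.
move=> x; rewrite {1}/reflect_hyp dotp_reflect_hyp_normal /reflect_hyp.
by rewrite mulrN scaleNr opprK subrK.
Qed.

Lemma dotp_reflect_hyp x y :
  dotp (reflect_hyp v x) (reflect_hyp v y) = dotp x y.
Proof. by rewrite dotp_reflect_hyp_sym reflect_hypK. Qed.

(* One of the two values is the maximum of f x and f (σ x), the other one the
   minimum. *)
Lemma polarizationD_reflect f x :
  polarization v f x + polarization v f (reflect_hyp v x) =
  f x + f (reflect_hyp v x).
Proof.
rewrite /polarization dotp_reflect_hyp_normal reflect_hypK oppr_ge0.
have [xv|xv|xv] := ltgtP (dotp x v) 0.
- by rewrite maxC addr_min_max.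
- by rewrite minC addrC addr_min_max addrC.
- by rewrite reflect_hyp_id // !maxxx.
Qed.

End UnitNormal.

Lemma mulmx_trmx_dotp x y : x *m y^T = (dotp x y)%:M.
Proof.
apply/matrixP => i j; rewrite !mxE (ord1 i) (ord1 j) /= mulr1n.
by apply: eq_bigr => k _; rewrite mxE.
Qed.

Definition reflection_mx v : 'M[R]_n := 1%:M - 2 *: (v^T *m v).

Lemma reflect_hypE v x : reflect_hyp v x = x *m reflection_mx v.
Proof.
rewrite /reflection_mx mulmxBr mulmx1 -scalemxAr mulmxA mulmx_trmx_dotp.
by rewrite mul_scalar_mx /reflect_hyp scalerA.
Qed.

Lemma reflection_mx_orthogonal v : dotp v v = 1 -> orthogonal_mx (reflection_mx v).
Proof.
move=> v_unit; set P := v^T *m v.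
have trP : (reflection_mx v)^T = reflection_mx v.
  by rewrite /reflection_mx linearB /= linearZ /= trmx1 trmx_mul trmxK.
have PP : P *m P = P by rewrite mulmxA -(mulmxA v^T) mulmx_trmx_dotp v_unit mulmx1.
rewrite /orthogonal_mx trP /reflection_mx mulmxBl mul1mx !mulmxBr mulmx1.
rewrite -!scalemxAl -!scalemxAr -/P PP scalerA opprB addrA -addrA -scalerBl.
by rewrite (_ : 2 * 2 - 2 = 2 :> R) ?subrK //; ring.
Qed.

End InnerProduct.

Section Continuity.
Variables (R : realType) (n : nat).

Lemma continuous_sum (T : topologicalType) (I : Type) (s : seq I)
    (F : I -> T -> R) :
  (forall i, continuous (F i)) -> continuous (fun x => \sum_(i <- s) F i x).
Proof.
move=> cF; elim: s => [|i s IHs] x.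
  by under eq_fun do rewrite big_nil; exact: cst_continuous.
by under eq_fun do rewrite big_cons; apply: continuousD; [exact: cF|exact: IHs].
Qed.

Lemma continuous_dotp (y : 'rV[R]_n) : continuous (fun x : 'rV[R]_n => dotp x y).
Proof.
apply: continuous_sum => i x.
by apply: continuousM; [exact: coord_continuous|exact: cst_continuous].
Qed.

Lemma continuous_reflect_hyp (v : 'rV[R]_n) : continuous (reflect_hyp v).
Proof.
move=> x; apply: (@continuousB _ _ _ id (fun x => (2 * dotp x v) *: v)).
  exact: cvg_id.
apply: (@continuousZr_tmp _ _ _ (fun x => 2 * dotp x v)).
by apply: continuousM; [exact: cst_continuous|exact: continuous_dotp].
Qed.

Lemma continuous_measurable_Rn (c : 'rV[R]_n -> R) : continuous c ->
  measurable_fun [set: Rn R n] (c : Rn R n -> R).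
Proof.
move=> cc; apply: (measurability _ (RGenOInfty.measurableE R)) => //.
move=> _ [_ [a ->] <-]; rewrite setTI; apply: sub_sigma_algebra.
by apply: (proj1 (continuousP c)) => //; exact: interval_open.
Qed.

Lemma continuous_measurable_Rn_Rn (c : 'rV[R]_n -> 'rV[R]_n) : continuous c ->
  measurable_fun [set: Rn R n] (c : Rn R n -> Rn R n).
Proof.
move=> cc; apply: (@measurability _ _ (Rn R n) (Rn R n) _ _ (@open 'rV[R]_n)) => //.
move=> _ [A oA <-]; rewrite setTI; apply: sub_sigma_algebra.
exact: (proj1 (continuousP c)).
Qed.

Lemma measurable_sphere (rad : R) : measurable (@sphere R n rad).
Proof.
have cnorm : continuous (fun x : 'rV[R]_n => Num.sqrt (dotp x x)).
  move=> x; apply: continuous_comp; last exact: sqrt_continuous.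
  apply: (@continuous_sum _ _ _ (fun i (x : 'rV[R]_n) => x ord0 i * x ord0 i)).
  by move=> i y; apply: continuousM; exact: coord_continuous.
by rewrite -[sphere _]setTI; exact: continuous_measurable_Rn cnorm _ _ (measurable_set1 rad).
Qed.

End Continuity.

Section Bounded.
Variables (R : realType) (T : Type) (A : set T).
Implicit Types h : T -> R.

Lemma boundedP h : [bounded h x | x in A] <-> exists M, forall x, A x -> `|h x| <= M.
Proof.
split=> [[M [_ hM]]|[M hM]]; first by exists (M + 1); apply: hM; rewrite ltrDl.
exists M; split=> [|N MN x Ax]; first exact: num_real.
by rewrite /= (le_trans (hM x Ax)) // ltW.
Qed.

Lemma boundedD h1 h2 : [bounded h1 x | x in A] -> [bounded h2 x | x in A] ->
  [bounded h1 x + h2 x | x in A].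
Proof.
move=> /boundedP[M1 hM1] /boundedP[M2 hM2]; apply/boundedP; exists (M1 + M2).
by move=> x Ax; rewrite (le_trans (ler_normD _ _)) // lerD ?hM1 ?hM2.
Qed.

Lemma boundedM h1 h2 : [bounded h1 x | x in A] -> [bounded h2 x | x in A] ->
  [bounded h1 x * h2 x | x in A].
Proof.
move=> /boundedP[M1 hM1] /boundedP[M2 hM2]; apply/boundedP; exists (M1 * M2).
by move=> x Ax; rewrite normrM ler_pM ?hM1 ?hM2.
Qed.

End Bounded.

Lemma continuous_bounded_comp (R : realType) (T : Type) (A : set T)
    (g : R -> R) (h : T -> R) : continuous g ->
  [bounded h x | x in A] -> [bounded g (h x) | x in A].
Proof.
move=> cg /boundedP[M hM].
have /compact_bounded/boundedP[N hN] :=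
  continuous_compact (continuous_subspaceT cg) (@segment_compact R (- M) M).
apply/boundedP; exists N => x Ax; apply: hN; exists (h x) => //.
by rewrite set_itvcc /= -ler_norml hM.
Qed.

Lemma integral_mfrestr (d : measure_display) (T : measurableType d) (R : realType)
    (S : set T) (mS : measurable S) (m : {measure set T -> \bar R})
    (mSfin : (m S < +oo)%E) (g : T -> \bar R) :
  (\int[m]_(x in S) g x = \int[mfrestr mS mSfin]_x (g \_ S) x)%E.
Proof.
rewrite (eq_measure_integral (mfrestr mS mSfin)); last first.
  by move=> A mA AS; change (m A = m (A `&` S)); rewrite setIidl.
exact: integral_mkcond.
Qed.

Section MeasurePreservingInvolution.
Variables (d : measure_display) (T : measurableType d) (R : realType).
Variables (S : set T) (mS : measurable S).
Variables (m : {measure set T -> \bar R}) (mSfin : (m S < +oo)%E).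
Variable sg : T -> T.
Hypotheses (msg : measurable_fun [set: T] sg) (sgK : involutive sg)
  (sgS : forall x, S x -> S (sg x))
  (msg_inv : forall A, measurable A -> A `<=` S -> m (sg @^-1` A `&` S) = m A).

Local Notation mu := (mfrestr mS mSfin).

Let sgS_iff x : S (sg x) <-> S x.
Proof. by split => [/sgS|/sgS//]; rewrite sgK. Qed.

Lemma integral_involution (h : T -> R) : measurable_fun S h ->
  [bounded h x | x in S] ->
  (\int[m]_(x in S) (h x)%:E = \int[m]_(x in S) (h (sg x))%:E)%E.
Proof.
move=> mh /boundedP[M hM]; rewrite !(integral_mfrestr mS mSfin).
have sgE : (fun x => (h (sg x))%:E) \_ S = ((fun x => (h x)%:E) \_ S) \o sg.
  apply/funext => x; rewrite /patch /=.
  case: (pselect (S x)) => Sx; first by rewrite !mem_set //; exact: sgS.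
  by rewrite !memNset // => /sgS_iff.
have mhS : measurable_fun [set: T] (h \_ S) by exact/(measurable_restrictT _ mS).
have hSsgE : ((fun x => (h x)%:E) \_ S) \o sg = EFin \o ((h \_ S) \o sg).
  by apply/funext => x; rewrite /patch /=; case: ifPn.
have int_hsg : mu.-integrable (sg @^-1` setT) (((fun x => (h x)%:E) \_ S) \o sg).
  rewrite preimage_setT hSsgE; apply: measurable_bounded_integrable => //.
  - by change (m (setT `&` S) < +oo)%E; rewrite setTI.
  - exact: measurableT_comp.
  - apply/boundedP; exists `|M| => x _; rewrite /patch /=.
    case: ifPn => [/set_mem Ssgx|_]; last by rewrite normr0.
    by rewrite (le_trans (hM _ Ssgx)) // ler_norm.
rewrite sgE -(integral_pushforward msg _ int_hsg) ?preimage_setT //; last first.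
  exact/(measurable_restrictT _ mS)/measurable_EFinP.
apply: eq_measure_integral => A mA _; rewrite /pushforward.
change (m (A `&` S) = m (sg @^-1` A `&` S)).
rewrite -msg_inv; [|exact: measurableI|exact: subIsetr].
congr (m _); apply/seteqP; split => x /=; first by move=> [[Ax _] Sx].
by move=> [Ax Sx]; do 2 split => //; exact: sgS.
Qed.

Let measurable_comp_sg (h : T -> R) : measurable_fun S h ->
  measurable_fun S (h \o sg).
Proof.
move=> mh; apply: (measurable_comp (F := S) mS _ mh).
  by move=> _ [x Sx <-]; exact: sgS.
exact: measurable_funS measurableT _ msg.
Qed.

Let bounded_comp_sg (h : T -> R) : [bounded h x | x in S] ->
  [bounded h (sg x) | x in S].
Proof. by move=> /boundedP[M hM]; apply/boundedP; exists M => x /sgS/hM. Qed.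

Let integrable_bounded (h : T -> R) : measurable_fun S h ->
  [bounded h x | x in S] -> m.-integrable S (EFin \o h).
Proof. exact: measurable_bounded_integrable. Qed.

Lemma Rintegral_involution (h : T -> R) : measurable_fun S h ->
  [bounded h x | x in S] -> Rintegral m S h = Rintegral m S (h \o sg).
Proof. by move=> mh bh; rewrite /Rintegral integral_involution. Qed.

Lemma le_Rintegral_involution (h1 h2 : T -> R) :
  measurable_fun S h1 -> [bounded h1 x | x in S] ->
  measurable_fun S h2 -> [bounded h2 x | x in S] ->
  (forall x, S x -> h1 x + h1 (sg x) <= h2 x + h2 (sg x)) ->
  Rintegral m S h1 <= Rintegral m S h2.
Proof.
move=> mh1 bh1 mh2 bh2 le_h.
have int_h (h : T -> R) : measurable_fun S h -> [bounded h x | x in S] ->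
    m.-integrable S (EFin \o h) /\ m.-integrable S (EFin \o (h \o sg)).
  by move=> mh bh; split; apply: integrable_bounded => //;
    [exact: measurable_comp_sg|exact: bounded_comp_sg].
have [i1 i1sg] := int_h h1 mh1 bh1; have [i2 i2sg] := int_h h2 mh2 bh2.
have : Rintegral m S (fun x => h1 x + h1 (sg x)) <=
       Rintegral m S (fun x => h2 x + h2 (sg x)).
  apply: le_Rintegral => //; apply: integrable_bounded;
    by [apply: measurable_funD => //; exact: measurable_comp_sg
       |apply: boundedD => //; exact: bounded_comp_sg].
rewrite !RintegralD // -!Rintegral_involution //; lra.
Qed.

Lemma eq_Rintegral_involution (h1 h2 : T -> R) :
  measurable_fun S h1 -> [bounded h1 x | x in S] ->
  measurable_fun S h2 -> [bounded h2 x | x in S] ->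
  (forall x, S x -> h1 x + h1 (sg x) = h2 x + h2 (sg x)) ->
  Rintegral m S h1 = Rintegral m S h2.
Proof.
move=> mh1 bh1 mh2 bh2 eq_h; apply/eqP; rewrite eq_le.
by rewrite !le_Rintegral_involution // => x Sx; rewrite eq_h.
Qed.

End MeasurePreservingInvolution.

Section KernelOperator.
Variables (R : realType) (n : nat) (S : set (Rn R n)) (mS : measurable S).
Variables (m : {measure set (Rn R n) -> \bar R}) (mSfin : (m S < +oo)%E).
Variables (K : R -> R) (mK : measurable_fun [set: R] K) (MK : R).
Hypothesis K_le : forall t, `|K t| <= MK.

Local Notation mu := (mfrestr mS mSfin).

Lemma measurable_dotp (x : 'rV[R]_n) :
  measurable_fun [set: Rn R n] (fun y : Rn R n => dotp x y).
Proof.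
rewrite (_ : (fun y => _) = fun y : Rn R n => dotp y x); last first.
  by apply/funext => y; rewrite dotpC.
by apply: continuous_measurable_Rn; exact: continuous_dotp.
Qed.

Lemma measurable_dotp_pair :
  measurable_fun [set: Rn R n * Rn R n] (fun p => dotp p.1 p.2).
Proof.
have mcoord (i : 'I_n) : measurable_fun [set: Rn R n] (fun x : Rn R n => x ord0 i).
  by apply: continuous_measurable_Rn; exact: coord_continuous.
apply: measurable_sum => i; apply: measurable_funM.
  exact: measurableT_comp (mcoord i) measurable_fst.
exact: measurableT_comp (mcoord i) measurable_snd.
Qed.

Lemma measurable_Kop_integrand (x : 'rV[R]_n) (g : Rn R n -> R) : measurable_fun S g ->
  measurable_fun S (fun y => K (dotp x y) * g y).
Proof.
move=> mg; apply: measurable_funM => //; apply: measurable_funTS.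
exact: measurableT_comp mK (measurable_dotp x).
Qed.

Lemma bounded_Kop_integrand (x : 'rV[R]_n) (g : Rn R n -> R) :
  [bounded g y | y in S] -> [bounded K (dotp x y) * g y | y in S].
Proof. by apply: boundedM; apply/boundedP; exists MK. Qed.

Lemma measurable_Kop (g : Rn R n -> R) : measurable_fun S g ->
  [bounded g y | y in S] -> measurable_fun [set: Rn R n] (Kop S m K g).
Proof.
move=> mg /boundedP[Mg g_le].
pose F (p : Rn R n * Rn R n) := (K (dotp p.1 p.2) * (g \_ S) p.2)%:E.
have -> : Kop S m K g = fine \o fubini_F mu F.
  apply/funext => x; rewrite /Kop /Rintegral /= /fubini_F.
  congr fine; rewrite (integral_mfrestr mS mSfin); apply: eq_integral => y _.
  by rewrite /F /patch /=; case: ifPn => //; rewrite mulr0.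
apply: measurableT_comp => //; apply: (@measurable_fubini_F _ _ _ _ _ mu mu F).
have muT : (mu setT < +oo)%E by change (m (setT `&` S) < +oo)%E; rewrite setTI.
apply: measurable_bounded_integrable => //.
- suff : ((mu \x mu) (setT `*` setT) < +oo)%E by rewrite setXTT.
  rewrite product_measure1E // lte_mul_pinfty ?measure_ge0 //.
  by rewrite ge0_fin_numE // measure_ge0.
- apply: measurable_funM; first exact: measurableT_comp mK measurable_dotp_pair.
  apply: measurableT_comp measurable_snd.
  exact/(measurable_restrictT _ mS).
- apply/boundedP; exists (MK * `|Mg|) => -[x y] _ /=.
  rewrite normrM ler_pM // /patch; case: ifPn => [/set_mem Sy|_].
    by rewrite (le_trans (g_le y Sy)) // ler_norm.
  by rewrite normr0.
Qed.

Lemma Kop_bounded (g : Rn R n -> R) (A : set (Rn R n)) : measurable_fun S g ->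
  [bounded g y | y in S] -> [bounded Kop S m K g x | x in A].
Proof.
move=> mg /boundedP[Mg g_le]; apply/boundedP.
exists (MK * Mg * fine (m S)) => x _.
have ik : m.-integrable S (EFin \o (fun y => K (dotp x y) * g y)).
  apply: measurable_bounded_integrable => //; first exact: measurable_Kop_integrand.
  by apply: bounded_Kop_integrand; apply/boundedP; exists Mg.
rewrite (le_trans (le_normr_Rintegral mS ik)) // -Rintegral_cst //.
apply: le_Rintegral => //.
- apply: measurable_bounded_integrable => //.
    by apply: measurableT_comp; [exact: normr_measurable|exact: measurable_Kop_integrand].
  apply/boundedP; exists (MK * Mg) => y Sy.
  by rewrite normr_id normrM ler_pM ?g_le.
- by apply: measurable_bounded_integrable => //; exact: bounded_cst.
- by move=> y Sy; rewrite normrM ler_pM ?g_le.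
Qed.

End KernelOperator.

(* If c = max (a, b, c, d) and a + b = c + d, then a and b are the two convex
   combinations of c and d with weights t and 1 - t. *)
Lemma convex_funD_le_majorized (R : realType) (Psi : R -> R) (a b c d : R) :
  convex_fun Psi -> a + b = c + d -> a <= c -> b <= c ->
  Psi a + Psi b <= Psi c + Psi d.
Proof.
move=> cvx abcd ac bc; have [eq_cd|neq_cd] := eqVneq c d.
  by rewrite (_ : a = c) 1?(_ : b = c) -?eq_cd //; lra.
have lt_dc : d < c by rewrite lt_neqAle eq_sym neq_cd /=; lra.
have cd0 : c - d != 0 by rewrite subr_eq0.
pose t := (a - d) / (c - d).
have t01 : 0 <= t <= 1.
  by rewrite divr_ge0 ?ler_pdivrMr ?subr_gt0 //=; lra.
have t'01 : 0 <= 1 - t <= 1 by move: t01 => /andP[? ?]; apply/andP; split; lra.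
have ea : a = t * c + (1 - t) * d by rewrite /t; field.
have eb : b = (1 - t) * c + (1 - (1 - t)) * d.
  by rewrite (_ : b = c + d - a) /t; [field|lra].
have := cvx c d t t01; have := cvx c d (1 - t) t'01.
rewrite -ea -eb; lra.
Qed.

Lemma two_point_rearrangement (R : realFieldType) (K1 K2 u w p q : R) :
  p + q = u + w ->
  (K2 <= K1 /\ p = Num.max u w) \/ (K1 <= K2 /\ p = Num.min u w) ->
  K1 * u + K2 * w <= K1 * p + K2 * q /\ K2 * u + K1 * w <= K1 * p + K2 * q.
Proof.
move=> pq_uw; rewrite (_ : q = u + w - p); last by lra.
case=> -[le_K ->].
  have : u <= Num.max u w by rewrite le_max lexx.
  have : w <= Num.max u w by rewrite le_max lexx orbT.
  by split; nra.
have : Num.min u w <= u by rewrite ge_min lexx.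
have : Num.min u w <= w by rewrite ge_min lexx orbT.
by split; nra.
Qed.

Section Polarization.
Variables (R : realType) (n : nat) (S : set (Rn R n)) (mS : measurable S).
Variables (m : {measure set (Rn R n) -> \bar R}) (mSfin : (m S < +oo)%E).
Variables (v : 'rV[R]_n) (v_unit : dotp v v = 1).
Hypotheses (reflect_hyp_S : forall x, S x -> S (reflect_hyp v x))
  (reflect_hyp_inv : forall A, measurable A -> A `<=` S ->
     m (reflect_hyp v @^-1` A `&` S) = m A).
Variables (K : R -> R) (mK : measurable_fun [set: R] K) (MK : R).
Hypotheses (K_le : forall t, `|K t| <= MK) (K_mono : {homo K : s t / s <= t}).
Variables (f : Rn R n -> R) (mf : measurable_fun S f).
Hypothesis f01 : forall x, S x -> 0 <= f x <= 1.

Local Notation sg := (reflect_hyp v).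
Local Notation fs := (polarization v f).
Local Notation Kop := (Kop S m K).

Let msg : measurable_fun [set: Rn R n] (sg : Rn R n -> Rn R n).
Proof. by apply: continuous_measurable_Rn_Rn; exact: continuous_reflect_hyp. Qed.

Let sgK : involutive sg := reflect_hypK v_unit.

Let le_Rintegral_reflect := le_Rintegral_involution mS mSfin msg sgK reflect_hyp_S
  reflect_hyp_inv.

Let eq_Rintegral_reflect := eq_Rintegral_involution mS mSfin msg sgK reflect_hyp_S
  reflect_hyp_inv.

Let bounded01 (g : Rn R n -> R) : (forall y, S y -> 0 <= g y <= 1) ->
  [bounded g y | y in S].
Proof.
by move=> g01; apply/boundedP; exists 1 => y /g01 /andP[g0 g1]; rewrite ger0_norm.
Qed.

Lemma measurable_polarization : measurable_fun S fs.
Proof.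
have mfsg : measurable_fun S (f \o sg).
  apply: (measurable_comp (F := S) mS _ mf).
    by move=> _ [x Sx <-]; exact: reflect_hyp_S.
  exact: measurable_funS measurableT _ msg.
apply: measurable_fun_if => //.
- apply: measurable_fun_ler; first exact: measurable_cst.
  apply: measurable_funTS; rewrite (_ : (fun y => _) = fun y : Rn R n => dotp v y).
    exact: measurable_dotp.
  by apply/funext => y; rewrite dotpC.
- exact: measurable_funS (measurable_maxr mf mfsg).
- exact: measurable_funS (measurable_minr mf mfsg).
Qed.

Lemma polarization01 y : S y -> 0 <= fs y <= 1.
Proof.
move=> Sy; have /andP[f0 f1] := f01 Sy; have /andP[fs0 fs1] := f01 (reflect_hyp_S Sy).
rewrite /polarization; case: ifPn => _; apply/andP; split.
- by rewrite le_max f0.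
- by rewrite ge_max f1 fs1.
- by rewrite le_min f0 fs0.
- by rewrite ge_min f1.
Qed.

Lemma K_dotp_reflect_hyp x y : 0 <= dotp x v ->
  (0 <= dotp y v -> K (dotp x (sg y)) <= K (dotp x y)) /\
  (dotp y v < 0 -> K (dotp x y) <= K (dotp x (sg y))).
Proof.
move=> xv0; have -> : dotp x (sg y) = dotp x y - 2 * dotp y v * dotp x v.
  by rewrite dotpC dotp_reflect_hypl (dotpC y x) (dotpC v x).
split=> yv; apply: K_mono.
  by have := mulr_ge0 yv xv0; lra.
by have := mulr_le0_ge0 (ltW yv) xv0; lra.
Qed.

Lemma Kop_integrand_polarization x y : 0 <= dotp x v ->
  let K1 := K (dotp x y) in let K2 := K (dotp x (sg y)) in
  K1 * f y + K2 * f (sg y) <= K1 * fs y + K2 * fs (sg y) /\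
  K2 * f y + K1 * f (sg y) <= K1 * fs y + K2 * fs (sg y).
Proof.
move=> xv0 K1 K2; apply: two_point_rearrangement.
  exact: polarizationD_reflect.
have [K_ge K_le'] := K_dotp_reflect_hyp y xv0.
rewrite /polarization; case: (leP 0 (dotp y v)) => yv; [left|right].
  by split=> //; exact: K_ge.
by split=> //; exact: K_le'.
Qed.

Let measurable_integrand z (g : Rn R n -> R) : measurable_fun S g ->
  measurable_fun S (fun y => K (dotp z y) * g y).
Proof. exact: measurable_Kop_integrand. Qed.

Let bounded_integrand z (g : Rn R n -> R) : (forall y, S y -> 0 <= g y <= 1) ->
  [bounded K (dotp z y) * g y | y in S].
Proof. by move=> /bounded01; exact: bounded_Kop_integrand. Qed.

Let integrable_integrand z (g : Rn R n -> R) : measurable_fun S g ->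
  (forall y, S y -> 0 <= g y <= 1) ->
  m.-integrable S (EFin \o (fun y => K (dotp z y) * g y)).
Proof.
by move=> mg g01; apply: measurable_bounded_integrable => //;
  [exact: measurable_integrand|exact: bounded_integrand].
Qed.

Lemma Kop_polarization x : 0 <= dotp x v ->
  [/\ Kop f x + Kop f (sg x) = Kop fs x + Kop fs (sg x),
      Kop f x <= Kop fs x & Kop f (sg x) <= Kop fs x].
Proof.
move=> xv0; have mfs := measurable_polarization; have fs01 := polarization01.
split.
- rewrite /Kop -!RintegralD //; try exact: integrable_integrand.
  apply: eq_Rintegral_reflect => [||||y Sy];
    try (apply: measurable_funD; exact: measurable_integrand);
    try (apply: boundedD; exact: bounded_integrand).
  rewrite !dotp_reflect_hyp // !dotp_reflect_hyp_sym.
  set K1 := K (dotp x y); set K2 := K (dotp x (sg y)).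
  have factor (g : Rn R n -> R) : K1 * g y + K2 * g y + (K2 * g (sg y) + K1 * g (sg y))
      = (K1 + K2) * (g y + g (sg y)) by ring.
  by rewrite !factor polarizationD_reflect.
- apply: le_Rintegral_reflect => [||||y Sy];
    try exact: measurable_integrand; try exact: bounded_integrand.
  by have [] := Kop_integrand_polarization y xv0.
- apply: le_Rintegral_reflect => [||||y Sy];
    try exact: measurable_integrand; try exact: bounded_integrand.
  rewrite dotp_reflect_hyp // dotp_reflect_hyp_sym.
  by have [] := Kop_integrand_polarization y xv0.
Qed.

Lemma integral_Psi_Kop_polarization (Psi : R -> R) :
  convex_fun Psi -> continuous Psi ->
  (\int[m]_(x in S) (Psi (Kop f x))%:E <= \int[m]_(x in S) (Psi (Kop fs x))%:E)%E.
Proof.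
move=> cvx cPsi; have mfs := measurable_polarization; have fs01 := polarization01.
have mPsiK (g : Rn R n -> R) : measurable_fun S g -> (forall y, S y -> 0 <= g y <= 1) ->
    measurable_fun S (fun x => Psi (Kop g x)).
  move=> mg g01; apply: measurableT_comp; first exact: continuous_measurable_fun.
  by apply: measurable_funTS; apply: measurable_Kop => //; exact: bounded01.
have bPsiK (g : Rn R n -> R) : measurable_fun S g -> (forall y, S y -> 0 <= g y <= 1) ->
    [bounded Psi (Kop g x) | x in S].
  move=> mg g01; apply: continuous_bounded_comp => //.
  by apply: Kop_bounded => //; exact: bounded01.
have fin_PsiK (g : Rn R n -> R) : measurable_fun S g -> (forall y, S y -> 0 <= g y <= 1) ->
    (\int[m]_(x in S) (Psi (Kop g x))%:E)%E \is a fin_num.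
  move=> mg g01; apply: integrable_fin_num => //.
  by apply: measurable_bounded_integrable => //; [exact: mPsiK|exact: bPsiK].
rewrite -(fineK (fin_PsiK _ mf f01)) -(fineK (fin_PsiK _ mfs fs01)) lee_fin.
apply: le_Rintegral_reflect => [||||y Sy]; try exact: mPsiK; try exact: bPsiK.
have [yv0|yv0] := leP 0 (dotp y v).
  have [sumE le1 le2] := Kop_polarization yv0.
  exact: convex_funD_le_majorized.
have sgyv0 : 0 <= dotp (sg y) v by rewrite dotp_reflect_hyp_normal // oppr_ge0 ltW.
have [sumE le1 le2] := Kop_polarization sgyv0; rewrite sgK in sumE le1 le2.
by rewrite addrC [leRHS]addrC; exact: convex_funD_le_majorized.
Qed.

End Polarization.

Lemma unif_continuous_continuous (U V : uniformType) (g : U -> V) :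
  unif_continuous g -> continuous g.
Proof.
move=> guc x A /nbhsP[E entE sEA]; apply/nbhsP.
exists [set xy | E (g xy.1, g xy.2)]; first exact: guc.
by move=> y /xsectionP Exy; apply: sEA; apply/xsectionP.
Qed.

Theorem theorem5 (R : realType) (k : nat) (hn : (1 <= k)%N) (rad : R)
    (hrad : 0 < rad)
    (m : {measure set (Rn R k.+1) -> \bar R})
    (hmfin : (m (@sphere R k.+1 rad) < +oo)%E)
    (hminv : rotation_invariant_on (@sphere R k.+1 rad) m)
    (Psi : R -> R) (hPsi_cvx : convex_fun Psi) (hPsi_uc : unif_continuous Psi)
    (f : Rn R k.+1 -> R)
    (hf01 : forall x, @sphere R k.+1 rad x -> 0 <= f x <= 1)
    (hfint : m.-integrable (@sphere R k.+1 rad) (fun x => (f x)%:E))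
    (K : R -> R) (hKmono : {homo K : s t / s <= t})
    (hKbdd : exists M : R, forall t, `|K t| <= M)
    (hKmeas : measurable_fun [set: R] K)
    (v : 'rV[R]_k.+1) (hv : dotp v v = 1) (hvr : 0 < dotp v (@north R k rad)) :
  (\int[m]_(x in @sphere R k.+1 rad) (Psi (Kop (@sphere R k.+1 rad) m K f x))%:E
   <= \int[m]_(x in @sphere R k.+1 rad)
        (Psi (Kop (@sphere R k.+1 rad) m K (polarization v f) x))%:E)%E.
Proof.
have mS := @measurable_sphere R k.+1 rad.
have mf : measurable_fun (sphere rad) f.
  by apply/measurable_EFinP; exact: measurable_int hfint.
have reflect_S x : sphere rad x -> sphere rad (reflect_hyp v x).
  by rewrite /sphere /= dotp_reflect_hyp.
have reflect_inv A : measurable A -> A `<=` sphere rad ->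
    m (reflect_hyp v @^-1` A `&` sphere rad) = m A.
  move=> mA AS; rewrite -(hminv _ (reflection_mx_orthogonal hv) A mA AS).
  by congr (m (_ `&` _)); apply/seteqP; split => x /=; rewrite reflect_hypE.
have [MK K_le] := hKbdd.
apply: (integral_Psi_Kop_polarization mS hmfin hv) => //.
exact: unif_continuous_continuous.
Qed.
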